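(* Let $n\ge2$ be an integer, $x_0,t_0\in\mathbb{R}$, $\beta>0$, $\psi(t,x)=(x-x_0)^2-\beta(t-t_0)^2$, $\ell=\lambda\psi$ with $\lambda\ge 1$, and let $w\in C^\infty(\mathbb{R}^2;\mathbb{R})$. With $I_1(w),I_2(w)$ as defined in the context, one has the pointwise identity $$I_1(w)I_2(w)=\partial_x G+\sum_{m=0}^{n-1}\Big[\frac{n^2}{2}\binom{n-1}{m}\ell_x^{\,2n-2m-2}\ell_{xx}+R_m\Big]|\partial_x^m w|^2,$$ where $G$ is a finite sum of terms of the form $c\,\ell_x^{\,a}\ell_{xx}^{\,b}\,\partial_x^{i}w\,\partial_x^{j}w$ ($c\in\mathbb{R}$, $a,b,i,j\in\mathbb{Z}_{\ge0}$), and each $R_m$ is a polynomial in $\ell_x,\ell_{xx}$ (independent of $w$) such that on every bounded set of $(t,x)$ one has $|R_m|\le C\lambda^{2n-2m-3}$ for a constant $C$ independent of $\lambda\ge1$.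
   Context: $\binom{j}{k}$ denotes the binomial coefficient (zero unless $0\le k\le j$). For a smooth $w$ define $$I_1(w)=\sum_{\substack{j\in[0,n]\\ j\ \text{odd}}}\binom{n}{j}(-1)^{n-j}\ell_x^{\,n-j}\partial_x^j w-\binom{n}{2}\ell_{xx}\sum_{\substack{k\in[0,n-2]\\ k\ \text{even}}}\binom{n-2}{k}(-1)^{n-2-k}\ell_x^{\,n-2-k}\partial_x^k w,$$ $$I_2(w)=\sum_{\substack{k\in[0,n]\\ k\ \text{even}}}\binom{n}{k}(-1)^{n-k}\ell_x^{\,n-k}\partial_x^k w-\binom{n}{2}\ell_{xx}\sum_{\substack{j\in[0,n-2]\\ j\ \text{odd}}}\binom{n-2}{j}(-1)^{n-2-j}\ell_x^{\,n-2-j}\partial_x^j w.$$ (These are the parts of $e^{\ell}\partial_x^n(e^{-\ell}w)$ consisting of the highest-$\lambda$-order terms with odd (resp. even) $x$-derivatives of $w$ plus the next-highest-order terms with even (resp. odd) derivatives.) *)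

From Stdlib Require Import Reals Lra Lia List.
From Coquelicot Require Import Coquelicot.
Open Scope R_scope.

Fixpoint binom (j k : nat) : nat :=
  match j, k with
  | _, O => 1%nat
  | O, S _ => 0%nat
  | S j', S k' => (binom j' k' + binom j' (S k'))%nat
  end.

Definition Rbinom (j k : nat) : R := INR (binom j k).

Fixpoint sum_up (f : nat -> R) (N : nat) : R :=
  match N with
  | O => 0
  | S N' => sum_up f N' + f N'
  end.

Fixpoint Ck2 (k : nat) (f : R -> R -> R) : Prop :=
  match k with
  | O => forall t x, continuity_2d_pt f t x
  | S k' =>
      (forall t x, continuity_2d_pt f t x) /\
      (forall t x, ex_derive (fun s => f s x) t /\ ex_derive (fun y => f t y) x) /\
      Ck2 k' (fun t x => Derive (fun s => f s x) t) /\
      Ck2 k' (fun t x => Derive (fun y => f t y) x)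
  end.

Definition smooth2 (f : R -> R -> R) : Prop := forall k, Ck2 k f.

Definition psi (x0 t0 beta : R) (t x : R) : R :=
  (x - x0) ^ 2 - beta * (t - t0) ^ 2.

Definition ell (x0 t0 beta lam : R) (t x : R) : R := lam * psi x0 t0 beta t x.

Definition ell_x (x0 t0 beta lam : R) (t x : R) : R :=
  Derive (fun y => ell x0 t0 beta lam t y) x.

Definition ell_xx (x0 t0 beta lam : R) (t x : R) : R :=
  Derive_n (fun y => ell x0 t0 beta lam t y) 2 x.

Definition dxn (w : R -> R -> R) (j : nat) (t x : R) : R :=
  Derive_n (fun y => w t y) j x.

Definition I1 (n : nat) (x0 t0 beta lam : R) (w : R -> R -> R) (t x : R) : R :=
  let lx := ell_x x0 t0 beta lam t x in
  let lxx := ell_xx x0 t0 beta lam t x in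
  sum_up (fun j => if Nat.odd j then
            Rbinom n j * (-1) ^ (n - j) * lx ^ (n - j) * dxn w j t x else 0) (S n)
  - Rbinom n 2 * lxx *
    sum_up (fun k => if Nat.even k then
            Rbinom (n - 2) k * (-1) ^ (n - 2 - k) * lx ^ (n - 2 - k) * dxn w k t x
            else 0) (S (n - 2)).

Definition I2 (n : nat) (x0 t0 beta lam : R) (w : R -> R -> R) (t x : R) : R :=
  let lx := ell_x x0 t0 beta lam t x in
  let lxx := ell_xx x0 t0 beta lam t x in
  sum_up (fun k => if Nat.even k then
            Rbinom n k * (-1) ^ (n - k) * lx ^ (n - k) * dxn w k t x else 0) (S n)
  - Rbinom n 2 * lxx *
    sum_up (fun j => if Nat.odd j then
            Rbinom (n - 2) j * (-1) ^ (n - 2 - j) * lx ^ (n - 2 - j) * dxn w j t x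
            else 0) (S (n - 2)).

(* A G-term (c, a, b, i, j) stands for c * ell_x^a * ell_xx^b * d_x^i w * d_x^j w. *)
Definition Gterm : Type := (R * nat * nat * nat * nat)%type.

Definition Gval (G : list Gterm) (x0 t0 beta lam : R) (w : R -> R -> R) (t x : R) : R :=
  let lx := ell_x x0 t0 beta lam t x in
  let lxx := ell_xx x0 t0 beta lam t x in
  fold_right (fun '(c, a, b, i, j) acc =>
      c * lx ^ a * lxx ^ b * dxn w i t x * dxn w j t x + acc) 0 G.

(* A real polynomial in two variables, as a list of monomials (c, a, b) = c X^a Y^b. *)
Definition poly2 : Type := list (R * nat * nat)%type.

Definition poly2_eval (P : poly2) (X Y : R) : R :=
  fold_right (fun '(c, a, b) acc => c * X ^ a * Y ^ b + acc) 0 P.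

(* Write a = ell_x and b = ell_xx.  As psi is quadratic in x, a' = b and b' = 0, so
   I1 I2 is a polynomial in a, b and the u_k = d_x^k w, whose monomials c a^p b^q u_i u_j
   all satisfy p + q + i + j <= 2n.  The integration by parts
   u_i u_j = (u_i u_(j-1))' - u_(i+1) u_(j-1), applied until both indices meet, turns each
   monomial into +- c a^p b^q u_m^2 with m = (i+j)/2 when i+j is even, and into a multiple
   of c p a^(p-1) b^(q+1) u_m^2 with m = (i+j-1)/2 when i+j is odd, up to an x-derivative
   and to squares u_m^2 with 2m + 2 <= i + j whose coefficient has degree <= p + q.
   Only the monomials with p + q + i + j >= 2n - 1 contribute to the leading coefficient
   of u_m^2, which is computed with alternating Vandermonde sums; every other coefficient
   R_m has degree <= 2n - 2m - 3 in (a, b), and a, b = O(lam) on bounded sets. *)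

From Stdlib Require Import Reals Lra Lia List Wf_nat.
From Coquelicot Require Import Coquelicot.
Import ListNotations.
Local Open Scope bool_scope.
Open Scope R_scope.

Lemma sum_up_ext (f g : nat -> R) N :
  (forall j, (j < N)%nat -> f j = g j) -> sum_up f N = sum_up g N.
Proof.
  induction N as [|N IH]; intros H; simpl; [easy|].
  rewrite IH, (H N); auto with arith.
Qed.

Lemma sum_up_add (f g : nat -> R) N :
  sum_up (fun j => f j + g j) N = sum_up f N + sum_up g N.
Proof. induction N as [|N IH]; simpl; [lra|rewrite IH; lra]. Qed.

Lemma sum_up_scal (c : R) (f : nat -> R) N :
  sum_up (fun j => c * f j) N = c * sum_up f N.
Proof. induction N as [|N IH]; simpl; [lra|rewrite IH; lra]. Qed.

Lemma sum_up_zero N : sum_up (fun _ => 0) N = 0.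
Proof. induction N as [|N IH]; simpl; [lra|rewrite IH; lra]. Qed.

Lemma sum_up_eq0 (f : nat -> R) N :
  (forall j, (j < N)%nat -> f j = 0) -> sum_up f N = 0.
Proof. intros H. rewrite (sum_up_ext _ _ _ H). apply sum_up_zero. Qed.

Lemma sum_up_swap (F : nat -> nat -> R) N M :
  sum_up (fun j => sum_up (F j) M) N = sum_up (fun k => sum_up (fun j => F j k) N) M.
Proof.
  induction N as [|N IH]; simpl; [now rewrite sum_up_zero|].
  rewrite IH, <- sum_up_add; reflexivity.
Qed.

Lemma sum_up_succ_l (f : nat -> R) N :
  sum_up f (S N) = f 0%nat + sum_up (fun j => f (S j)) N.
Proof.
  induction N as [|N IH]; [simpl; lra|].
  change (sum_up f (S (S N))) with (sum_up f (S N) + f (S N)).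
  rewrite IH; simpl; lra.
Qed.

Lemma sum_up_rev (f : nat -> R) N :
  sum_up f N = sum_up (fun j => f (N - 1 - j)%nat) N.
Proof.
  induction N as [|N IH]; [easy|].
  rewrite (sum_up_succ_l (fun j => f (S N - 1 - j)%nat)).
  change (sum_up f (S N)) with (sum_up f N + f N).
  rewrite IH, Rplus_comm; replace (S N - 1 - 0)%nat with N by lia.
  f_equal; apply sum_up_ext; intros j _; f_equal; lia.
Qed.

Lemma sum_up_delta (f : nat -> R) K N :
  sum_up (fun k => if Nat.eqb k K then f k else 0) N = if Nat.ltb K N then f K else 0.
Proof.
  induction N as [|N IH]; [destruct (Nat.ltb_spec K 0); [lia|easy]|].
  simpl; rewrite IH.
  destruct (Nat.eqb_spec N K), (Nat.ltb_spec K N), (Nat.ltb_spec K (S N)); subst; try lia; lra.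
Qed.

Lemma sum_up_min (f : nat -> R) K N :
  sum_up (fun j => if Nat.ltb j K then f j else 0) N = sum_up f (Nat.min K N).
Proof.
  induction N as [|N IH]; simpl; [now rewrite Nat.min_0_r|].
  rewrite IH; destruct (Nat.ltb_spec N K).
  - replace (Nat.min K (S N)) with (S N) by lia.
    replace (Nat.min K N) with N by lia; reflexivity.
  - replace (Nat.min K (S N)) with (Nat.min K N) by lia; lra.
Qed.

Lemma sum_up_trunc (f : nat -> R) K N :
  (forall j, (K <= j)%nat -> f j = 0) -> (K <= N)%nat -> sum_up f N = sum_up f K.
Proof.
  intros Hf HK; induction N as [|N IH]; [now replace K with 0%nat by lia|].
  destruct (Nat.eq_dec K (S N)) as [->|]; [easy|].
  simpl; rewrite IH, Hf by lia; lra.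
Qed.

Lemma sum_up_pairs (f : nat -> R) K :
  sum_up f (2 * K) = sum_up (fun m => f (2 * m)%nat + f (2 * m + 1)%nat) K.
Proof.
  induction K as [|K IH]; [easy|].
  replace (2 * S K)%nat with (S (S (2 * K))) by lia.
  change (sum_up f (S (S (2 * K)))) with (sum_up f (2 * K) + f (2 * K)%nat + f (S (2 * K))).
  rewrite IH; simpl; rewrite Nat.add_1_r; lra.
Qed.

Lemma sum_up_antidiag (F : nat -> nat -> R) A B :
  sum_up (fun j => sum_up (F j) B) A =
  sum_up (fun N => sum_up (fun j =>
    if Nat.ltb j A && Nat.ltb (N - j) B then F j (N - j)%nat else 0) (S N)) (A + B).
Proof.
  transitivity (sum_up (fun j => sum_up (fun k =>
    sum_up (fun N => if Nat.eqb N (j + k) then F j k else 0) (A + B)) B) A).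
  { apply sum_up_ext; intros j Hj; apply sum_up_ext; intros k Hk.
    rewrite (sum_up_delta (fun _ => F j k)), (proj2 (Nat.ltb_lt _ _)) by lia; reflexivity. }
  rewrite (sum_up_ext _ (fun j => sum_up (fun N =>
    sum_up (fun k => if Nat.eqb N (j + k) then F j k else 0) B) (A + B)))
    by (intros; apply sum_up_swap).
  rewrite sum_up_swap; apply sum_up_ext; intros N _.
  rewrite (sum_up_ext _ (fun j => if Nat.ltb j (S N) then
    (if Nat.ltb (N - j) B then F j (N - j)%nat else 0) else 0)).
  2:{ intros j _.
      rewrite (sum_up_ext _ (fun k => if Nat.eqb k (N - j) then
        (if Nat.leb j N then F j k else 0) else 0)).
      - rewrite sum_up_delta.
        destruct (Nat.leb_spec j N), (Nat.ltb_spec j (S N)), (Nat.ltb (N - j) B); lia || easy.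
      - intros k _; destruct (Nat.eqb_spec N (j + k)), (Nat.eqb_spec k (N - j)),
          (Nat.leb_spec j N); subst; try lia; easy. }
  rewrite (sum_up_ext (fun j => if Nat.ltb j A && Nat.ltb (N - j) B then F j (N - j)%nat else 0)
    (fun j => if Nat.ltb j A then (if Nat.ltb (N - j) B then F j (N - j)%nat else 0) else 0))
    by (intros j _; now destruct (Nat.ltb j A)).
  rewrite !sum_up_min, Nat.min_comm; reflexivity.
Qed.

Definition dsum (N1 N2 : nat) (F : nat -> nat -> R) : R :=
  sum_up (fun j => sum_up (F j) N2) N1.

Lemma sum_up_mul (f g : nat -> R) N M :
  sum_up f N * sum_up g M = dsum N M (fun j k => f j * g k).
Proof.
  unfold dsum; induction N as [|N IH]; simpl; [lra|].
  rewrite <- IH, sum_up_scal; lra.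
Qed.

Lemma dsum_ext N1 N2 F G :
  (forall j k, (j < N1)%nat -> (k < N2)%nat -> F j k = G j k) -> dsum N1 N2 F = dsum N1 N2 G.
Proof. intros H; apply sum_up_ext; intros j Hj; apply sum_up_ext; auto. Qed.

Lemma dsum_scal c N1 N2 F : c * dsum N1 N2 F = dsum N1 N2 (fun j k => c * F j k).
Proof.
  unfold dsum; rewrite <- sum_up_scal; apply sum_up_ext; intros.
  now rewrite <- sum_up_scal.
Qed.

Lemma even_2m m : Nat.even (2 * m) = true.
Proof. apply Nat.even_spec; now exists m. Qed.

Lemma even_2m1 m : Nat.even (2 * m + 1) = false.
Proof. now rewrite Nat.even_add, even_2m. Qed.

Lemma div2_2m m : Nat.div2 (2 * m) = m.
Proof. apply Nat.div2_double. Qed.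

Lemma div2_2m1 m : Nat.div2 (2 * m + 1) = m.
Proof. rewrite Nat.add_1_r; apply Nat.div2_succ_double. Qed.

Lemma div2_odd_spec N : Nat.even N = false -> (2 * Nat.div2 N + 1 = N)%nat.
Proof.
  intros H; pose proof (Nat.div2_odd N) as E.
  rewrite <- Nat.negb_even, H in E; simpl in E; lia.
Qed.

Lemma odd_negb_even j : Nat.odd j = negb (Nat.even j).
Proof. now rewrite <- Nat.negb_even. Qed.

Lemma even_sub N j : (j <= N)%nat -> Nat.even (N - j) = Bool.eqb (Nat.even N) (Nat.even j).
Proof.
  intros H; replace N with ((N - j) + j)%nat at 2 by lia.
  rewrite Nat.even_add; now destruct (Nat.even (N - j)), (Nat.even j).
Qed.

Lemma odd_ex j : Nat.odd j = true -> exists t, j = (2 * t + 1)%nat.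
Proof. intros [t Ht]%Nat.odd_spec; exists t; lia. Qed.

Lemma even_ex j : Nat.even j = true -> exists t, j = (2 * t)%nat.
Proof. intros [t Ht]%Nat.even_spec; exists t; lia. Qed.

Lemma pow_m1_parity k : (-1) ^ k = if Nat.even k then 1 else -1.
Proof.
  destruct (Nat.Even_or_Odd k) as [[t ->]|[t ->]].
  - rewrite even_2m, pow_mult; replace ((-1) ^ 2) with 1 by ring; apply pow1.
  - rewrite even_2m1, pow_add, pow_mult; replace ((-1) ^ 2) with 1 by ring.
    rewrite pow1; ring.
Qed.

Lemma pow_m1_even k : Nat.even k = true -> (-1) ^ k = 1.
Proof. intros H; now rewrite pow_m1_parity, H. Qed.

Lemma pow_m1_odd k : Nat.even k = false -> (-1) ^ k = -1.
Proof. intros H; now rewrite pow_m1_parity, H. Qed.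

Lemma pow_m1_sq k : (-1) ^ k * (-1) ^ k = 1.
Proof. rewrite pow_m1_parity; destruct (Nat.even k); ring. Qed.

Lemma pow_m1_same_parity i j : Nat.even (i + j) = true -> (-1) ^ i = (-1) ^ j.
Proof.
  rewrite Nat.even_add, !pow_m1_parity.
  now destruct (Nat.even i), (Nat.even j).
Qed.

Lemma pow_m1_opp_parity i j : Nat.even (i + j) = false -> (-1) ^ i = - (-1) ^ j.
Proof.
  rewrite Nat.even_add, !pow_m1_parity.
  destruct (Nat.even i), (Nat.even j); easy || (intros; ring).
Qed.

Lemma binom_0_r j : binom j 0 = 1%nat.
Proof. now destruct j. Qed.

Lemma binom_gt j k : (j < k)%nat -> binom j k = 0%nat.
Proof.
  revert k; induction j as [|j IH]; intros [|k] H; simpl; try lia; auto.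
  rewrite !IH by lia; reflexivity.
Qed.

Lemma binom_1_r n : binom n 1 = n.
Proof. induction n as [|n IH]; simpl; [easy|now rewrite binom_0_r, IH]. Qed.

Lemma binom_absorb n k : (S k * binom (S n) (S k) = S n * binom n k)%nat.
Proof.
  revert k; induction n as [|n IH]; intros k.
  - destruct k as [|[|k]]; simpl; lia.
  - change (binom (S (S n)) (S k)) with (binom (S n) k + binom (S n) (S k))%nat.
    destruct k as [|k].
    + pose proof (IH 0%nat); rewrite binom_0_r in *; lia.
    + pose proof (IH k); pose proof (IH (S k)).
      change (binom (S n) (S k)) with (binom n k + binom n (S k))%nat in *; lia.
Qed.

Lemma Rbinom_0 j : Rbinom j 0 = 1.
Proof. unfold Rbinom; now rewrite binom_0_r. Qed.

Lemma Rbinom_S j k : Rbinom (S j) (S k) = Rbinom j k + Rbinom j (S k).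
Proof. apply plus_INR. Qed.

Lemma Rbinom_gt j k : (j < k)%nat -> Rbinom j k = 0.
Proof. intros; unfold Rbinom; now rewrite binom_gt. Qed.

Lemma Rbinom_absorb n k : INR (S k) * Rbinom (S n) (S k) = INR (S n) * Rbinom n k.
Proof. unfold Rbinom; now rewrite <- !mult_INR, binom_absorb. Qed.

Lemma Rbinom_2 n : Rbinom n 2 = INR n * (INR n - 1) / 2.
Proof.
  destruct n as [|n]; [unfold Rbinom; simpl; field|].
  pose proof (Rbinom_absorb n 1) as H; unfold Rbinom in *; rewrite binom_1_r in H.
  replace (INR 2) with 2 in H by (simpl; ring).
  apply (Rmult_eq_reg_l 2); [|lra]; rewrite H, S_INR; field.
Qed.

Lemma Rbinom_out_mul n j c : Nat.ltb j (S n) = false -> Rbinom n j * c = 0.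
Proof. intros H%Nat.ltb_ge; rewrite Rbinom_gt by lia; ring. Qed.

(* [Rbinom_prev k m] is C(k, m-1), with the truncated subtraction corrected at m = 0. *)
Definition Rbinom_prev (k m : nat) : R :=
  match m with O => 0 | S m' => Rbinom k m' end.

Lemma Rbinom_prev_absorb k m : INR (S k) * Rbinom_prev k m = INR m * Rbinom (S k) m.
Proof. destruct m; simpl Rbinom_prev; [simpl; ring|now rewrite (Rbinom_absorb k m)]. Qed.

Lemma Rbinom_absorb_sub k m : INR (S k) * Rbinom k m = (INR (S k) - INR m) * Rbinom (S k) m.
Proof.
  destruct m as [|m]; [rewrite !Rbinom_0; simpl; ring|].
  pose proof (Rbinom_absorb k m); rewrite Rbinom_S in *; lra.
Qed.

(** * Alternating Vandermonde sums *)

(* The coefficient of X^N in (1 - X)^n (1 + X)^k. *)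
Definition alt_conv (n k N : nat) : R :=
  sum_up (fun p => (-1) ^ p * Rbinom n p * Rbinom k (N - p)) (S N).

Lemma alt_conv_0 n k : alt_conv n k 0 = 1.
Proof. unfold alt_conv; simpl; rewrite !Rbinom_0; lra. Qed.

Lemma alt_conv_succ_l n k N : alt_conv (S n) k (S N) = alt_conv n k (S N) - alt_conv n k N.
Proof.
  unfold alt_conv; rewrite !(sum_up_succ_l _ (S N)), !Rbinom_0.
  rewrite (sum_up_ext (fun j => (-1) ^ S j * Rbinom (S n) (S j) * Rbinom k (S N - S j))
    (fun j => (-1) ^ S j * Rbinom n (S j) * Rbinom k (S N - S j)
              + (-1) * ((-1) ^ j * Rbinom n j * Rbinom k (N - j)))).
  2:{ intros j _; rewrite Rbinom_S; replace (S N - S j)%nat with (N - j)%nat by lia.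
      simpl; ring. }
  rewrite sum_up_add, sum_up_scal; ring.
Qed.

Lemma alt_conv_succ_r n k N : alt_conv n (S k) (S N) = alt_conv n k (S N) + alt_conv n k N.
Proof.
  unfold alt_conv.
  change (sum_up ?f (S (S N))) with (sum_up f (S N) + f (S N)); cbv beta.
  rewrite Nat.sub_diag, !Rbinom_0.
  rewrite (sum_up_ext (fun p => (-1) ^ p * Rbinom n p * Rbinom (S k) (S N - p))
    (fun p => (-1) ^ p * Rbinom n p * Rbinom k (S N - p)
              + (-1) ^ p * Rbinom n p * Rbinom k (N - p))).
  2:{ intros p Hp; replace (S N - p)%nat with (S (N - p)) by lia; rewrite Rbinom_S; ring. }
  rewrite sum_up_add; ring.
Qed.

(* (1 - X)^n (1 + X)^n = (1 - X^2)^n *)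
Lemma alt_conv_diag n N :
  alt_conv n n N = if Nat.even N then (-1) ^ Nat.div2 N * Rbinom n (Nat.div2 N) else 0.
Proof.
  revert N; induction n as [|n IH]; intros N.
  - destruct N as [|N]; [rewrite alt_conv_0; cbn [Nat.even Nat.div2 pow]; rewrite Rbinom_0; ring|].
    unfold alt_conv; rewrite sum_up_eq0.
    + destruct N as [|N]; [easy|].
      destruct (Nat.even (S (S N))); [|easy].
      change (Nat.div2 (S (S N))) with (S (Nat.div2 N)).
      rewrite (Rbinom_gt 0 (S (Nat.div2 N))) by apply Nat.lt_0_succ; ring.
    + intros [|p] _;
        [rewrite (Rbinom_gt 0 (S N - 0)) by lia|rewrite (Rbinom_gt 0 (S p)) by lia]; ring.
  - destruct N as [|[|N]].
    + rewrite alt_conv_0; cbn [Nat.even Nat.div2 pow]; rewrite Rbinom_0; ring.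
    + rewrite alt_conv_succ_r, alt_conv_succ_l, !alt_conv_0, IH; simpl; ring.
    + rewrite alt_conv_succ_r, !alt_conv_succ_l, !IH; simpl.
      destruct (Nat.even N); [|ring].
      rewrite Rbinom_S; simpl; ring.
Qed.

Lemma alt_conv_diag_odd n m : alt_conv n n (2 * m + 1) = 0.
Proof. now rewrite alt_conv_diag, even_2m1. Qed.

Lemma alt_conv_diag_even n m : alt_conv n n (2 * m) = (-1) ^ m * Rbinom n m.
Proof. now rewrite alt_conv_diag, even_2m, div2_2m. Qed.

Lemma alt_conv_SS_l k m :
  alt_conv (S (S k)) k (2 * m) = (-1) ^ m * (Rbinom k m - Rbinom_prev k m).
Proof.
  destruct m as [|m]; [simpl; rewrite alt_conv_0, Rbinom_0; ring|].
  replace (2 * S m)%nat with (S (S (2 * m))) by lia.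
  rewrite !alt_conv_succ_l; replace (S (S (2 * m))) with (2 * S m)%nat by lia.
  replace (S (2 * m)) with (2 * m + 1)%nat by lia.
  rewrite !alt_conv_diag_even, alt_conv_diag_odd; simpl; ring.
Qed.

Lemma alt_conv_S_r k m : alt_conv k (S k) (2 * m) = (-1) ^ m * Rbinom k m.
Proof.
  destruct m as [|m]; [simpl; rewrite alt_conv_0, Rbinom_0; ring|].
  replace (2 * S m)%nat with (S (2 * m + 1)) by lia.
  rewrite alt_conv_succ_r; replace (S (2 * m + 1)) with (2 * S m)%nat by lia.
  rewrite alt_conv_diag_even, alt_conv_diag_odd; ring.
Qed.

Lemma alt_conv_weighted n m : (1 <= n)%nat ->
  sum_up (fun j => (-1) ^ j * INR j * Rbinom n j * Rbinom n (2 * m + 1 - j)) (S (2 * m + 1))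
  = - INR n * (-1) ^ m * Rbinom (n - 1) m.
Proof.
  intros Hn; destruct n as [|n]; [lia|]; replace (S n - 1)%nat with n by lia.
  rewrite sum_up_succ_l; simpl INR at 1; rewrite Rmult_0_r, !Rmult_0_l, Rplus_0_l.
  rewrite (sum_up_ext _ (fun p =>
    - INR (S n) * ((-1) ^ p * Rbinom n p * Rbinom (S n) (2 * m - p)))).
  2:{ intros p _; replace (2 * m + 1 - S p)%nat with (2 * m - p)%nat by lia.
      replace ((-1) ^ S p * INR (S p) * Rbinom (S n) (S p))
        with (- (-1) ^ p * (INR (S p) * Rbinom (S n) (S p))) by (simpl; ring).
      rewrite Rbinom_absorb; ring. }
  rewrite sum_up_scal; replace (2 * m + 1)%nat with (S (2 * m)) by lia.
  fold (alt_conv n (S n) (2 * m)); rewrite alt_conv_S_r; ring.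
Qed.

(** * Symbolic monomials and integration by parts *)

(* a, b and u k stand for ell_x, ell_xx and d_x^k w. *)
Definition gterm_eval (T : Gterm) (a b : R) (u : nat -> R) : R :=
  let '(c, p, q, i, j) := T in c * a ^ p * b ^ q * u i * u j.

Definition gterms_eval (G : list Gterm) (a b : R) (u : nat -> R) : R :=
  fold_right (fun T acc => gterm_eval T a b u + acc) 0 G.

(* For p = 0 the derivative of a^p vanishes; keeping b^q then keeps the degree from growing. *)
Definition deriv_bdeg (p q : nat) : nat := match p with O => q | S _ => S q end.

Lemma deriv_bdeg_le p q : (pred p + deriv_bdeg p q <= p + q)%nat.
Proof. destruct p; simpl; lia. Qed.

(* The x-derivative of a monomial, using a' = b, b' = 0 and (u k)' = u (k+1). *)
Definition gterm_deriv (T : Gterm) : list Gterm :=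
  let '(c, p, q, i, j) := T in
  [(c * INR p, pred p, deriv_bdeg p q, i, j); (c, p, q, S i, j); (c, p, q, i, S j)].

Definition gterms_deriv (G : list Gterm) : list Gterm := flat_map gterm_deriv G.

Definition gterms_scale (r : R) (G : list Gterm) : list Gterm :=
  map (fun T => let '(c, p, q, i, j) := T in (r * c, p, q, i, j)) G.

Lemma gterms_eval_app G1 G2 a b u :
  gterms_eval (G1 ++ G2) a b u = gterms_eval G1 a b u + gterms_eval G2 a b u.
Proof. induction G1 as [|T G1 IH]; simpl; [lra|rewrite IH; lra]. Qed.

Lemma gterms_deriv_app G1 G2 : gterms_deriv (G1 ++ G2) = gterms_deriv G1 ++ gterms_deriv G2.
Proof. apply flat_map_app. Qed.

Lemma gterms_eval_deriv_scale r G a b u :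
  gterms_eval (gterms_deriv (gterms_scale r G)) a b u = r * gterms_eval (gterms_deriv G) a b u.
Proof.
  induction G as [|[[[[c p] q] i] j] G IH]; simpl; [lra|].
  rewrite IH; ring.
Qed.

Definition sqterm : Type := (R * nat * nat * nat)%type.

Definition sqterm_coef (it : sqterm) (a b : R) : R := let '(c, p, q, _) := it in c * a ^ p * b ^ q.
Definition sqterm_deg (it : sqterm) : nat := let '(_, p, q, _) := it in (p + q)%nat.
Definition sqterm_idx (it : sqterm) : nat := let '(_, _, _, m) := it in m.

Definition sqterm_eval (it : sqterm) (a b : R) (u : nat -> R) : R :=
  sqterm_coef it a b * (u (sqterm_idx it) * u (sqterm_idx it)).

Definition sqterms_eval (L : list sqterm) (a b : R) (u : nat -> R) : R :=
  fold_right (fun it acc => sqterm_eval it a b u + acc) 0 L.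

Definition sqterms_scale (r : R) (L : list sqterm) : list sqterm :=
  map (fun it => let '(c, p, q, m) := it in (r * c, p, q, m)) L.

Lemma sqterms_eval_app L1 L2 a b u :
  sqterms_eval (L1 ++ L2) a b u = sqterms_eval L1 a b u + sqterms_eval L2 a b u.
Proof. induction L1 as [|it L1 IH]; simpl; [lra|rewrite IH; lra]. Qed.

Lemma sqterms_eval_scale r L a b u :
  sqterms_eval (sqterms_scale r L) a b u = r * sqterms_eval L a b u.
Proof.
  induction L as [|[[[c p] q] m] L IH]; simpl; [lra|].
  rewrite IH; unfold sqterm_eval; simpl; ring.
Qed.

Definition sqterm_shape (P : nat -> nat -> Prop) (it : sqterm) : Prop :=
  P (sqterm_deg it) (sqterm_idx it).

Lemma Forall_sqterms_scale P r L :
  List.Forall (sqterm_shape P) L -> List.Forall (sqterm_shape P) (sqterms_scale r L).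
Proof. induction 1 as [|[[[c p] q] m] L]; simpl; constructor; auto. Qed.

Definition reduces (P : nat -> nat -> Prop) (f h : R -> R -> (nat -> R) -> R) : Prop :=
  exists G rest,
    (forall a b u, f a b u = gterms_eval (gterms_deriv G) a b u + h a b u + sqterms_eval rest a b u)
    /\ List.Forall (sqterm_shape P) rest.

Lemma reduces_ext P f h f' h' :
  (forall a b u, f a b u = f' a b u) -> (forall a b u, h a b u = h' a b u) ->
  reduces P f h -> reduces P f' h'.
Proof.
  intros Ef Eh (G & rest & H & HP); exists G, rest; split; auto.
  intros; rewrite <- Ef, <- Eh; auto.
Qed.

Lemma reduces_mono (P Q : nat -> nat -> Prop) f h :
  (forall d m, P d m -> Q d m) -> reduces P f h -> reduces Q f h.
Proof.
  intros PQ (G & rest & H & HP); exists G, rest; split; auto.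
  eapply List.Forall_impl; [|exact HP]; intros it; apply PQ.
Qed.

Lemma reduces_refl P f : reduces P f f.
Proof. exists [], []; split; [intros; simpl; ring|constructor]. Qed.

Lemma reduces_deriv P T : reduces P (gterms_eval (gterm_deriv T)) (fun _ _ _ => 0).
Proof.
  exists [T], []; split; [|constructor].
  intros; simpl; rewrite app_nil_r; ring.
Qed.

Lemma reduces_add P f1 h1 f2 h2 : reduces P f1 h1 -> reduces P f2 h2 ->
  reduces P (fun a b u => f1 a b u + f2 a b u) (fun a b u => h1 a b u + h2 a b u).
Proof.
  intros (G1 & r1 & H1 & P1) (G2 & r2 & H2 & P2).
  exists (G1 ++ G2), (r1 ++ r2); split; [|now apply List.Forall_app].
  intros; rewrite gterms_deriv_app, gterms_eval_app, sqterms_eval_app, H1, H2; ring.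
Qed.

Lemma reduces_scal P r f h : reduces P f h ->
  reduces P (fun a b u => r * f a b u) (fun a b u => r * h a b u).
Proof.
  intros (G & rest & H & HP).
  exists (gterms_scale r G), (sqterms_scale r rest); split; [|now apply Forall_sqterms_scale].
  intros; rewrite gterms_eval_deriv_scale, sqterms_eval_scale, H; ring.
Qed.

Lemma reduces_to_rest P f it : reduces P f (sqterm_eval it) -> sqterm_shape P it ->
  reduces P f (fun _ _ _ => 0).
Proof.
  intros (G & rest & H & HP) Hit; exists G, (it :: rest); split; [|now constructor].
  intros; rewrite H; simpl; ring.
Qed.

Lemma reduces_sum P (f h : nat -> R -> R -> (nat -> R) -> R) N :
  (forall j, (j < N)%nat -> reduces P (f j) (h j)) ->
  reduces P (fun a b u => sum_up (fun j => f j a b u) N)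
    (fun a b u => sum_up (fun j => h j a b u) N).
Proof.
  induction N as [|N IH]; intros H; [apply reduces_refl|].
  apply reduces_add; [apply IH; auto|apply H; lia].
Qed.

Lemma reduces_dsum P N1 N2 (f h : nat -> nat -> R -> R -> (nat -> R) -> R) :
  (forall j k, (j < N1)%nat -> (k < N2)%nat -> reduces P (f j k) (h j k)) ->
  reduces P (fun a b u => dsum N1 N2 (fun j k => f j k a b u))
            (fun a b u => dsum N1 N2 (fun j k => h j k a b u)).
Proof.
  intros H; apply (reduces_sum P (fun j a b u => sum_up (fun k => f j k a b u) N2)
    (fun j a b u => sum_up (fun k => h j k a b u) N2)).
  intros j Hj; apply reduces_sum; auto.
Qed.

Lemma reduces_if P (c : bool) f h : (c = true -> reduces P f h) ->
  reduces P (fun a b u => if c then f a b u else 0) (fun a b u => if c then h a b u else 0).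
Proof. destruct c; intros H; [now apply H|apply reduces_refl]. Qed.

(* The square term that repeated integration by parts extracts from c a^p b^q u_i u_j: the
   indices meet at m = (i+j)/2, or at m and m+1 when i+j is odd, and then
   u_m u_(m+1) = (u_m^2)'/2. *)
Definition diag_part (c : R) (p q i j : nat) : sqterm :=
  let m := Nat.div2 (i + j) in
  if Nat.even (i + j) then ((-1) ^ (i + m) * c, p, q, m)
  else (- (-1) ^ (i + m) * (INR j - INR i) / 2 * (c * INR p), pred p, deriv_bdeg p q, m).

Lemma diag_part_even c p q i j m : (i + j = 2 * m)%nat ->
  diag_part c p q i j = ((-1) ^ (i + m) * c, p, q, m).
Proof. intros H; unfold diag_part; now rewrite H, even_2m, div2_2m. Qed.

Lemma diag_part_odd c p q i j m : (i + j = 2 * m + 1)%nat ->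
  diag_part c p q i j =
  (- (-1) ^ (i + m) * (INR j - INR i) / 2 * (c * INR p), pred p, deriv_bdeg p q, m).
Proof. intros H; unfold diag_part; now rewrite H, even_2m1, div2_2m1. Qed.

Lemma diag_part_idx c p q i j : sqterm_idx (diag_part c p q i j) = Nat.div2 (i + j).
Proof. unfold diag_part; now destruct (Nat.even (i + j)). Qed.

Lemma diag_part_deg c p q i j : (sqterm_deg (diag_part c p q i j) <= p + q)%nat.
Proof.
  unfold diag_part; destruct (Nat.even (i + j)); simpl; [lia|apply deriv_bdeg_le].
Qed.

Lemma diag_part_sym c p q i j a b u :
  sqterm_eval (diag_part c p q i j) a b u = sqterm_eval (diag_part c p q j i) a b u.
Proof.
  unfold diag_part, sqterm_eval; rewrite (Nat.add_comm j i).
  destruct (Nat.even (i + j)) eqn:E; simpl; rewrite !pow_add.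
  - rewrite (pow_m1_same_parity i j E); ring.
  - rewrite (pow_m1_opp_parity i j E); field.
Qed.

Lemma gterm_ibp c p q i j a b u :
  gterm_eval (c, p, q, i, S j) a b u =
  gterms_eval (gterm_deriv (c, p, q, i, j)) a b u
  - gterm_eval (c * INR p, pred p, deriv_bdeg p q, i, j) a b u
  - gterm_eval (c, p, q, S i, j) a b u.
Proof. simpl; ring. Qed.

Definition ibp_shape (p q i j d m : nat) : Prop := (d <= p + q /\ 2 * m + 2 <= i + j)%nat.

Lemma gterm_reduces_step c p q i j :
  reduces (ibp_shape p q i (S j)) (gterm_eval (c * INR p, pred p, deriv_bdeg p q, i, j))
    (sqterm_eval (diag_part (c * INR p) (pred p) (deriv_bdeg p q) i j)) ->
  reduces (ibp_shape p q i (S j)) (gterm_eval (c, p, q, S i, j))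
    (sqterm_eval (diag_part c p q (S i) j)) ->
  reduces (ibp_shape p q i (S j)) (gterm_eval (c, p, q, i, S j))
    (sqterm_eval (diag_part c p q i (S j))).
Proof.
  intros Hf1 Hf2; pose proof (deriv_bdeg_le p q).
  destruct (Nat.Even_or_Odd (i + j)) as [[m Hm]|[m Hm]].
  - eapply reduces_ext; [| |exact (reduces_add _ _ _ _ _
      (reduces_add _ _ _ _ _ (reduces_deriv _ (c, p, q, i, j)) (reduces_scal _ (-1) _ _ Hf1))
      (reduces_scal _ (-1) _ _ Hf2))].
    + intros; rewrite gterm_ibp; ring.
    + intros a b u.
      rewrite (diag_part_odd _ _ _ i (S j) m), (diag_part_even _ _ _ i j m),
        (diag_part_odd _ _ _ (S i) j m) by lia.
      unfold sqterm_eval; cbn [sqterm_coef sqterm_idx].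
      rewrite Nat.add_succ_l; change ((-1) ^ S ?k) with (-1 * (-1) ^ k).
      rewrite !S_INR; field.
  - assert (Hr1 : reduces (ibp_shape p q i (S j))
      (gterm_eval (c * INR p, pred p, deriv_bdeg p q, i, j)) (fun _ _ _ => 0)).
    { apply (reduces_to_rest _ _ _ Hf1); unfold sqterm_shape, ibp_shape.
      rewrite diag_part_idx, Hm, div2_2m1.
      pose proof (diag_part_deg (c * INR p) (pred p) (deriv_bdeg p q) i j); lia. }
    eapply reduces_ext; [| |exact (reduces_add _ _ _ _ _
      (reduces_add _ _ _ _ _ (reduces_deriv _ (c, p, q, i, j)) (reduces_scal _ (-1) _ _ Hr1))
      (reduces_scal _ (-1) _ _ Hf2))].
    + intros; rewrite gterm_ibp; ring.
    + intros a b u.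
      rewrite (diag_part_even _ _ _ i (S j) (S m)), (diag_part_even _ _ _ (S i) j (S m)) by lia.
      unfold sqterm_eval; simpl; ring.
Qed.

Lemma gterm_reduces_upper d : forall c p q i,
  reduces (ibp_shape p q i (i + d)) (gterm_eval (c, p, q, i, i + d)%nat)
    (sqterm_eval (diag_part c p q i (i + d))).
Proof.
  induction d as [d IH] using lt_wf_ind; intros c p q i.
  destruct d as [|[|d]].
  - eapply reduces_ext; [reflexivity| |apply reduces_refl].
    intros a b u; rewrite (diag_part_even _ _ _ i (i + 0) i) by lia.
    unfold sqterm_eval; simpl; rewrite pow_add, pow_m1_sq, Nat.add_0_r; ring.
  - eapply reduces_ext; [| |exact (reduces_add _ _ _ _ _
      (reduces_deriv _ (c / 2, p, q, i, i))
      (reduces_refl _ (sqterm_eval (diag_part c p q i (i + 1)))))].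
    + intros a b u; rewrite (diag_part_odd _ _ _ i (i + 1) i) by lia.
      unfold sqterm_eval; simpl; rewrite pow_add, pow_m1_sq, Nat.add_1_r, S_INR; field.
    + intros; simpl; ring.
  - pose proof (deriv_bdeg_le p q).
    replace (i + S (S d))%nat with (S (i + S d)) by lia.
    apply gterm_reduces_step.
    + eapply reduces_mono; [|apply IH; lia]; unfold ibp_shape; intros; lia.
    + replace (i + S d)%nat with (S i + d)%nat by lia.
      eapply reduces_mono; [|apply IH; lia]; unfold ibp_shape; intros; lia.
Qed.

Lemma gterm_reduces c p q i j :
  reduces (ibp_shape p q i j) (gterm_eval (c, p, q, i, j)) (sqterm_eval (diag_part c p q i j)).
Proof.
  destruct (Nat.le_gt_cases i j) as [Hij|Hij].
  - replace j with (i + (j - i))%nat by lia; apply gterm_reduces_upper.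
  - eapply reduces_mono, reduces_ext; [| | |apply (gterm_reduces_upper (i - j) c p q j)];
      replace (j + (i - j))%nat with i by lia.
    + unfold ibp_shape; intros; lia.
    + intros; simpl; ring.
    + intros; apply diag_part_sym.
Qed.

Lemma gterm_reduces_if (P : nat -> nat -> Prop) (cnd : bool) c p q i j :
  (cnd = true -> forall d m, ibp_shape p q i j d m -> P d m) ->
  reduces P (fun a b u => if cnd then gterm_eval (c, p, q, i, j) a b u else 0)
    (fun a b u => if cnd then sqterm_eval (diag_part c p q i j) a b u else 0).
Proof.
  intros H; apply reduces_if; intros Hc.
  eapply reduces_mono; [apply (H Hc)|apply gterm_reduces].
Qed.

(** * Expansion of I1 I2 *)

Definition I1_poly (n : nat) (a b : R) (u : nat -> R) : R :=
  sum_up (fun j => if Nat.odd j then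
            Rbinom n j * (-1) ^ (n - j) * a ^ (n - j) * u j else 0) (S n)
  - Rbinom n 2 * b *
    sum_up (fun k => if Nat.even k then
            Rbinom (n - 2) k * (-1) ^ (n - 2 - k) * a ^ (n - 2 - k) * u k
            else 0) (S (n - 2)).

Definition I2_poly (n : nat) (a b : R) (u : nat -> R) : R :=
  sum_up (fun k => if Nat.even k then
            Rbinom n k * (-1) ^ (n - k) * a ^ (n - k) * u k else 0) (S n)
  - Rbinom n 2 * b *
    sum_up (fun j => if Nat.odd j then
            Rbinom (n - 2) j * (-1) ^ (n - 2 - j) * a ^ (n - 2 - j) * u j
            else 0) (S (n - 2)).

Definition sbinom (n j : nat) : R := Rbinom n j * (-1) ^ (n - j).

Lemma sbinom_mul n n' j k :
  sbinom n j * sbinom n' k = (-1) ^ ((n - j) + (n' - k)) * (Rbinom n j * Rbinom n' k).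
Proof. unfold sbinom; rewrite pow_add; ring. Qed.

(* The four products of the leading (A) and subleading (B) parts of I1 and I2. *)
Definition mono_AA (n j k : nat) : Gterm :=
  (sbinom n j * sbinom n k, ((n - j) + (n - k))%nat, 0%nat, j, k).
Definition mono_AB (n j k : nat) : Gterm :=
  (- Rbinom n 2 * sbinom n j * sbinom (n - 2) k, ((n - j) + (n - 2 - k))%nat, 1%nat, j, k).
Definition mono_BA (n j k : nat) : Gterm :=
  (- Rbinom n 2 * sbinom (n - 2) j * sbinom n k, ((n - 2 - j) + (n - k))%nat, 1%nat, j, k).
Definition mono_BB (n j k : nat) : Gterm :=
  (Rbinom n 2 * Rbinom n 2 * sbinom (n - 2) j * sbinom (n - 2) k,
   ((n - 2 - j) + (n - 2 - k))%nat, 2%nat, j, k).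

Lemma I1_I2_poly_expand n a b u :
  I1_poly n a b u * I2_poly n a b u =
    dsum (S n) (S n) (fun j k =>
      if Nat.odd j && Nat.even k then gterm_eval (mono_AA n j k) a b u else 0)
  + dsum (S n) (S (n - 2)) (fun j k =>
      if Nat.odd j && Nat.odd k then gterm_eval (mono_AB n j k) a b u else 0)
  + dsum (S (n - 2)) (S n) (fun j k =>
      if Nat.even j && Nat.even k then gterm_eval (mono_BA n j k) a b u else 0)
  + dsum (S (n - 2)) (S (n - 2)) (fun j k =>
      if Nat.even j && Nat.odd k then gterm_eval (mono_BB n j k) a b u else 0).
Proof.
  unfold I1_poly, I2_poly.
  set (A1 := sum_up _ (S n)); set (B1 := sum_up _ (S (n - 2))).
  set (A2 := sum_up (fun k => if Nat.even k then _ else 0) (S n)).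
  set (B2 := sum_up (fun j => if Nat.odd j then _ else 0) (S (n - 2))).
  replace ((A1 - Rbinom n 2 * b * B1) * (A2 - Rbinom n 2 * b * B2)) with
    (A1 * A2 + (- Rbinom n 2 * b) * (A1 * B2) + (- Rbinom n 2 * b) * (B1 * A2)
     + (Rbinom n 2 * b * Rbinom n 2 * b) * (B1 * B2)) by ring.
  unfold A1, B1, A2, B2; rewrite !sum_up_mul, !dsum_scal.
  f_equal; [f_equal; [f_equal|]|]; apply dsum_ext; intros j k _ _;
    destruct (Nat.odd j), (Nat.even j), (Nat.odd k), (Nat.even k);
    simpl; unfold sbinom; rewrite ?pow_add; ring.
Qed.

Definition remainder_shape (n d m : nat) : Prop := (d + 2 * m + 3 <= 2 * n)%nat.

Definition gterm_diag (T : Gterm) : sqterm :=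
  let '(c, p, q, i, j) := T in diag_part c p q i j.

Definition main_AA (n : nat) (a b : R) (u : nat -> R) : R := dsum (S n) (S n) (fun j k =>
  if Nat.odd j && Nat.even k then sqterm_eval (gterm_diag (mono_AA n j k)) a b u else 0).
Definition main_AB (n : nat) (a b : R) (u : nat -> R) : R := dsum (S n) (S (n - 2)) (fun j k =>
  if Nat.odd j && Nat.odd k then sqterm_eval (gterm_diag (mono_AB n j k)) a b u else 0).
Definition main_BA (n : nat) (a b : R) (u : nat -> R) : R := dsum (S (n - 2)) (S n) (fun j k =>
  if Nat.even j && Nat.even k then sqterm_eval (gterm_diag (mono_BA n j k)) a b u else 0).

Ltac parity_witness :=
  repeat match goal with
  | H : Nat.odd ?j = true |- _ => let t := fresh "t" in destruct (odd_ex j H) as [t ->]; clear H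
  | H : Nat.even ?j = true |- _ => let t := fresh "t" in destruct (even_ex j H) as [t ->]; clear H
  end.

Lemma I1_I2_poly_reduces n :
  reduces (remainder_shape n) (fun a b u => I1_poly n a b u * I2_poly n a b u)
    (fun a b u => main_AA n a b u + main_AB n a b u + main_BA n a b u).
Proof.
  eapply reduces_ext; [intros; symmetry; apply I1_I2_poly_expand|intros; apply Rplus_0_r|].
  apply reduces_add; [apply reduces_add; [apply reduces_add|]|].
  1-3: apply reduces_dsum; intros j k Hj Hk; apply gterm_reduces_if;
    intros [Hj' Hk']%andb_prop; parity_witness; unfold ibp_shape, remainder_shape; intros; lia.
  eapply reduces_ext; [reflexivity| |].
  2:{ apply reduces_dsum; intros j k Hj Hk.
      apply reduces_if with (h := fun _ _ _ => 0); intros [Hj' Hk']%andb_prop.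
      eapply reduces_to_rest; [eapply reduces_mono; [|apply gterm_reduces]|].
      - unfold ibp_shape, remainder_shape; intros; parity_witness; lia.
      - unfold sqterm_shape, remainder_shape; rewrite diag_part_idx.
        pose proof (diag_part_deg (Rbinom n 2 * Rbinom n 2 * sbinom (n - 2) j * sbinom (n - 2) k)
          ((n - 2 - j) + (n - 2 - k)) 2 j k).
        assert (Hm : (2 * Nat.div2 (j + k) + 1 = j + k)%nat).
        { apply div2_odd_spec; rewrite Nat.even_add, Hj', <- Nat.negb_odd, Hk'; reflexivity. }
        lia. }
  intros; unfold dsum; apply sum_up_eq0; intros; apply sum_up_eq0; intros.
  now destruct (_ && _).
Qed.

(** * The leading coefficients *)

Definition antidiag_sum (N1 N2 : nat) (phi : nat -> nat -> R) (N : nat) : R :=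
  sum_up (fun j => if Nat.ltb j N1 && Nat.ltb (N - j) N2 then phi j (N - j)%nat else 0) (S N).

Lemma dsum_by_antidiag (phi : nat -> nat -> R) (g : nat -> R) N1 N2 :
  dsum N1 N2 (fun j k => phi j k * g (Nat.div2 (j + k))) =
  sum_up (fun N => g (Nat.div2 N) * antidiag_sum N1 N2 phi N) (N1 + N2).
Proof.
  unfold dsum; rewrite sum_up_antidiag; apply sum_up_ext; intros N _.
  unfold antidiag_sum; rewrite <- sum_up_scal; apply sum_up_ext; intros j Hj.
  destruct (Nat.ltb j N1 && Nat.ltb (N - j) N2); [|ring].
  replace (j + (N - j))%nat with N by lia; ring.
Qed.

Lemma antidiag_sum_full N1 N2 (phi : nat -> nat -> R) N :
  (forall j k, (N1 <= j \/ N2 <= k)%nat -> phi j k = 0) ->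
  antidiag_sum N1 N2 phi N = sum_up (fun j => phi j (N - j)%nat) (S N).
Proof.
  intros H; apply sum_up_ext; intros j _.
  destruct (Nat.ltb_spec j N1), (Nat.ltb_spec (N - j) N2); simpl; auto;
    symmetry; apply H; lia.
Qed.

Lemma diag_part_coef_zero p q i j a b : sqterm_coef (diag_part 0 p q i j) a b = 0.
Proof. unfold diag_part; destruct (Nat.even (i + j)); simpl; ring. Qed.

Definition main_coef (cnd : nat -> nat -> bool) (mono : nat -> nat -> Gterm)
  (a b : R) (j k : nat) : R :=
  if cnd j k then sqterm_coef (gterm_diag (mono j k)) a b else 0.

Lemma main_by_antidiag (cnd : nat -> nat -> bool) (mono : nat -> nat -> Gterm) N1 N2 a b u :
  (forall j k, sqterm_idx (gterm_diag (mono j k)) = Nat.div2 (j + k)) ->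
  dsum N1 N2 (fun j k => if cnd j k then sqterm_eval (gterm_diag (mono j k)) a b u else 0) =
  sum_up (fun N => u (Nat.div2 N) * u (Nat.div2 N) *
    antidiag_sum N1 N2 (main_coef cnd mono a b) N) (N1 + N2).
Proof.
  intros Hidx; rewrite <- (dsum_by_antidiag (main_coef cnd mono a b) (fun m => u m * u m)).
  apply dsum_ext; intros j k _ _; unfold main_coef, sqterm_eval.
  destruct (cnd j k); [now rewrite Hidx|ring].
Qed.

Lemma main_coef_zero cnd mono a b j k c p q :
  mono j k = (c, p, q, j, k) -> c = 0 -> main_coef cnd mono a b j k = 0.
Proof.
  intros Hm ->; unfold main_coef; rewrite Hm.
  destruct (cnd j k); [apply diag_part_coef_zero|reflexivity].
Qed.

Definition coef_AA (n : nat) (a b : R) : nat -> nat -> R :=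
  main_coef (fun j k => Nat.odd j && Nat.even k) (mono_AA n) a b.
Definition coef_AB (n : nat) (a b : R) : nat -> nat -> R :=
  main_coef (fun j k => Nat.odd j && Nat.odd k) (mono_AB n) a b.
Definition coef_BA (n : nat) (a b : R) : nat -> nat -> R :=
  main_coef (fun j k => Nat.even j && Nat.even k) (mono_BA n) a b.

Lemma antidiag_AA_full n a b N :
  antidiag_sum (S n) (S n) (coef_AA n a b) N = sum_up (fun j => coef_AA n a b j (N - j)%nat) (S N).
Proof.
  apply antidiag_sum_full; intros j k Hjk.
  eapply main_coef_zero; [reflexivity|]; unfold sbinom.
  destruct Hjk; [rewrite (Rbinom_gt n j)|rewrite (Rbinom_gt n k)]; lia || ring.
Qed.

Lemma antidiag_AA_even n a b m : antidiag_sum (S n) (S n) (coef_AA n a b) (2 * m) = 0.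
Proof.
  rewrite antidiag_AA_full; apply sum_up_eq0; intros j Hj.
  unfold coef_AA, main_coef; rewrite odd_negb_even, even_sub, even_2m by lia.
  now destruct (Nat.even j).
Qed.

Lemma coef_AA_odd n a b m j : (m < n)%nat -> (j <= 2 * m + 1)%nat ->
  coef_AA n a b j (2 * m + 1 - j)%nat =
  (-1) ^ m * INR (2 * n - 2 * m - 1) * a ^ (2 * n - 2 * m - 2) * b / 2 *
  ((1 - (-1) ^ j) / 2 * ((INR j - INR (2 * m + 1 - j)) * (Rbinom n j * Rbinom n (2 * m + 1 - j)))).
Proof.
  intros Hm Hj; unfold coef_AA, main_coef.
  rewrite odd_negb_even, even_sub, even_2m1 by lia.
  destruct (Nat.even j) eqn:Ej; cbn [negb andb Bool.eqb];
    [rewrite (pow_m1_even j Ej); field|].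
  unfold mono_AA; cbn [gterm_diag]; rewrite (diag_part_odd _ _ _ j (2 * m + 1 - j) m) by lia.
  destruct (Nat.le_gt_cases j n) as [Hjn|Hjn];
    [|unfold sbinom; rewrite (Rbinom_gt n j) by lia; simpl; ring].
  destruct (Nat.le_gt_cases (2 * m + 1 - j) n) as [Hkn|Hkn];
    [|unfold sbinom; rewrite (Rbinom_gt n (2 * m + 1 - j)) by lia; simpl; ring].
  rewrite sbinom_mul.
  replace ((n - j) + (n - (2 * m + 1 - j)))%nat with (S (2 * (n - m - 1))) by lia.
  cbn [sqterm_coef pred deriv_bdeg].
  rewrite pow_add, (pow_m1_odd j Ej), (pow_m1_odd (S (2 * (n - m - 1)))) by
    (rewrite <- Nat.add_1_r; apply even_2m1).
  replace (2 * n - 2 * m - 1)%nat with (S (2 * (n - m - 1))) by lia.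
  replace (2 * n - 2 * m - 2)%nat with (2 * (n - m - 1))%nat by lia; field.
Qed.

(* The summand is antisymmetric under j <-> N - j, which exchanges parities, so its sum over
   odd j is minus half its alternating sum. *)
Lemma binom_skew_odd_sum n m : (1 <= n)%nat ->
  sum_up (fun j => (1 - (-1) ^ j) / 2 *
    ((INR j - INR (2 * m + 1 - j)) * (Rbinom n j * Rbinom n (2 * m + 1 - j)))) (S (2 * m + 1))
  = INR n * (-1) ^ m * Rbinom (n - 1) m.
Proof.
  intros Hn; set (N := (2 * m + 1)%nat).
  set (T := fun j => (INR j - INR (N - j)) * (Rbinom n j * Rbinom n (N - j))).
  assert (HT : sum_up T (S N) = 0).
  { assert (H : sum_up T (S N) = sum_up (fun j => -1 * T j) (S N)).
    { rewrite sum_up_rev; replace (S N - 1)%nat with N by lia.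
      apply sum_up_ext; intros j Hj; unfold T; replace (N - (N - j))%nat with j by lia; ring. }
    rewrite sum_up_scal in H; lra. }
  assert (HE : sum_up (fun j => (-1) ^ j * T j) (S N) = - 2 * INR n * (-1) ^ m * Rbinom (n - 1) m).
  { unfold T; rewrite (sum_up_ext _ (fun j =>
      2 * ((-1) ^ j * INR j * Rbinom n j * Rbinom n (2 * m + 1 - j))
      + - INR N * ((-1) ^ j * Rbinom n j * Rbinom n (2 * m + 1 - j)))).
    2:{ intros j Hj; rewrite minus_INR by lia; unfold N; ring. }
    rewrite sum_up_add, !sum_up_scal; unfold N; rewrite alt_conv_weighted by lia.
    fold (alt_conv n n (2 * m + 1)); rewrite alt_conv_diag_odd; ring. }
  rewrite (sum_up_ext _ (fun j => / 2 * T j + - / 2 * ((-1) ^ j * T j)))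
    by (intros; unfold T; field).
  rewrite sum_up_add, !sum_up_scal, HT, HE; field.
Qed.

Lemma antidiag_AA_odd n a b m : (m < n)%nat ->
  antidiag_sum (S n) (S n) (coef_AA n a b) (2 * m + 1) =
  INR (2 * n - 2 * m - 1) / 2 * INR n * Rbinom (n - 1) m * a ^ (2 * n - 2 * m - 2) * b.
Proof.
  intros Hm; rewrite antidiag_AA_full.
  erewrite sum_up_ext; [|intros j Hj; apply coef_AA_odd; lia].
  rewrite sum_up_scal, binom_skew_odd_sum by lia.
  transitivity (INR (2 * n - 2 * m - 1) / 2 * INR n * Rbinom (n - 1) m
    * a ^ (2 * n - 2 * m - 2) * b * ((-1) ^ m * (-1) ^ m)); [field|rewrite pow_m1_sq; ring].
Qed.

Lemma antidiag_sum_high N1 N2 phi N :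
  (N1 + N2 <= N + 1)%nat -> antidiag_sum N1 N2 phi N = 0.
Proof.
  intros H; apply sum_up_eq0; intros j _.
  destruct (Nat.ltb_spec j N1), (Nat.ltb_spec (N - j) N2); simpl; auto; lia.
Qed.

Lemma antidiag_AA_high n a b N : (2 * n <= N)%nat -> antidiag_sum (S n) (S n) (coef_AA n a b) N = 0.
Proof.
  intros H; destruct (Nat.eq_dec N (2 * n)) as [->|]; [apply antidiag_AA_even|].
  apply antidiag_sum_high; lia.
Qed.

Lemma antidiag_AB_odd n a b m : antidiag_sum (S n) (S (n - 2)) (coef_AB n a b) (2 * m + 1) = 0.
Proof.
  apply sum_up_eq0; intros j Hj; unfold coef_AB, main_coef.
  rewrite !odd_negb_even, even_sub, even_2m1 by lia.
  destruct (Nat.even j); simpl; now destruct (_ && _).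
Qed.

Lemma antidiag_BA_odd n a b m : antidiag_sum (S (n - 2)) (S n) (coef_BA n a b) (2 * m + 1) = 0.
Proof.
  apply sum_up_eq0; intros j Hj; unfold coef_BA, main_coef.
  rewrite even_sub, even_2m1 by lia.
  destruct (Nat.even j); simpl; now destruct (_ && _).
Qed.

Lemma coef_AB_even n a b m j : (2 <= n)%nat -> (j <= 2 * m)%nat ->
  (if Nat.ltb j (S n) && Nat.ltb (2 * m - j) (S (n - 2)) then coef_AB n a b j (2 * m - j) else 0) =
  - Rbinom n 2 * (-1) ^ m * a ^ (2 * n - 2 * m - 2) * b *
  ((1 - (-1) ^ j) / 2 * ((-1) ^ j * (Rbinom n j * Rbinom (n - 2) (2 * m - j)))).
Proof.
  intros Hn Hj.
  destruct (Nat.ltb j (S n)) eqn:E1; [|simpl; rewrite (Rbinom_out_mul n j) by auto; ring].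
  destruct (Nat.ltb (2 * m - j) (S (n - 2))) eqn:E2;
    [|simpl; rewrite (Rmult_comm (Rbinom n j)), (Rbinom_out_mul (n - 2) (2 * m - j)) by auto; ring].
  apply Nat.ltb_lt in E1, E2; unfold coef_AB, main_coef; cbn [andb].
  rewrite !odd_negb_even, even_sub, even_2m by lia.
  destruct (Nat.even j) eqn:Ej; cbn [andb negb Bool.eqb]; [rewrite (pow_m1_even j Ej); field|].
  unfold mono_AB; cbn [gterm_diag]; rewrite (diag_part_even _ _ _ j (2 * m - j) m) by lia.
  replace (- Rbinom n 2 * sbinom n j * sbinom (n - 2) (2 * m - j))
    with (- Rbinom n 2 * (sbinom n j * sbinom (n - 2) (2 * m - j))) by ring.
  rewrite sbinom_mul.
  replace ((n - j) + (n - 2 - (2 * m - j)))%nat with (2 * (n - m - 1))%nat by lia.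
  replace (2 * n - 2 * m - 2)%nat with (2 * (n - m - 1))%nat by lia.
  cbn [sqterm_coef]; rewrite (pow_m1_even (2 * (n - m - 1))) by apply even_2m.
  rewrite pow_add, (pow_m1_odd j Ej); field.
Qed.

Lemma coef_BA_even n a b m j : (2 <= n)%nat -> (j <= 2 * m)%nat ->
  (if Nat.ltb j (S (n - 2)) && Nat.ltb (2 * m - j) (S n) then coef_BA n a b j (2 * m - j) else 0) =
  - Rbinom n 2 * (-1) ^ m * a ^ (2 * n - 2 * m - 2) * b *
  ((1 + (-1) ^ j) / 2 * ((-1) ^ j * (Rbinom (n - 2) j * Rbinom n (2 * m - j)))).
Proof.
  intros Hn Hj.
  destruct (Nat.ltb j (S (n - 2))) eqn:E1;
    [|simpl; rewrite (Rbinom_out_mul (n - 2) j) by auto; ring].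
  destruct (Nat.ltb (2 * m - j) (S n)) eqn:E2;
    [|simpl; rewrite (Rmult_comm (Rbinom (n - 2) j)), (Rbinom_out_mul n (2 * m - j)) by auto; ring].
  apply Nat.ltb_lt in E1, E2; unfold coef_BA, main_coef; cbn [andb].
  rewrite even_sub, even_2m by lia.
  destruct (Nat.even j) eqn:Ej; cbn [andb negb Bool.eqb]; [|rewrite (pow_m1_odd j Ej); field].
  unfold mono_BA; cbn [gterm_diag]; rewrite (diag_part_even _ _ _ j (2 * m - j) m) by lia.
  replace (- Rbinom n 2 * sbinom (n - 2) j * sbinom n (2 * m - j))
    with (- Rbinom n 2 * (sbinom (n - 2) j * sbinom n (2 * m - j))) by ring.
  rewrite sbinom_mul.
  replace ((n - 2 - j) + (n - (2 * m - j)))%nat with (2 * (n - m - 1))%nat by lia.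
  replace (2 * n - 2 * m - 2)%nat with (2 * (n - m - 1))%nat by lia.
  cbn [sqterm_coef]; rewrite (pow_m1_even (2 * (n - m - 1))) by apply even_2m.
  rewrite pow_add, (pow_m1_even j Ej); field.
Qed.

(* Reversing j <-> 2m - j in the BA sum, the two sums add up to an alternating
   Vandermonde sum. *)
Lemma antidiag_AB_BA_even n a b m : (2 <= n)%nat ->
  antidiag_sum (S n) (S (n - 2)) (coef_AB n a b) (2 * m)
  + antidiag_sum (S (n - 2)) (S n) (coef_BA n a b) (2 * m) =
  - Rbinom n 2 * (Rbinom (n - 2) m - Rbinom_prev (n - 2) m) * a ^ (2 * n - 2 * m - 2) * b.
Proof.
  intros Hn; unfold antidiag_sum.
  rewrite (sum_up_ext _ _ _ (fun j Hj => coef_AB_even n a b m j Hn (proj1 (Nat.lt_succ_r _ _) Hj))).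
  rewrite (sum_up_ext _ _ _ (fun j Hj => coef_BA_even n a b m j Hn (proj1 (Nat.lt_succ_r _ _) Hj))).
  rewrite !sum_up_scal, <- Rmult_plus_distr_l.
  rewrite (sum_up_rev (fun j => (1 + (-1) ^ j) / 2 * _)), <- sum_up_add.
  rewrite (sum_up_ext _ (fun p => (-1) ^ p * Rbinom n p * Rbinom (n - 2) (2 * m - p))).
  2:{ intros j Hj; replace (S (2 * m) - 1 - j)%nat with (2 * m - j)%nat by lia.
      replace (2 * m - (2 * m - j))%nat with j by lia.
      rewrite (pow_m1_same_parity (2 * m - j) j)
        by (replace (2 * m - j + j)%nat with (2 * m)%nat by lia; apply even_2m).
      field. }
  fold (alt_conv n (n - 2) (2 * m)).
  pose proof (alt_conv_SS_l (n - 2) m) as Ha; replace (S (S (n - 2))) with n in Ha by lia.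
  rewrite Ha.
  transitivity (- Rbinom n 2 * (Rbinom (n - 2) m - Rbinom_prev (n - 2) m)
    * a ^ (2 * n - 2 * m - 2) * b * ((-1) ^ m * (-1) ^ m)); [ring|rewrite pow_m1_sq; ring].
Qed.

Lemma main_coef_identity n m : (2 <= n)%nat -> (m < n)%nat ->
  INR (2 * n - 2 * m - 1) / 2 * INR n * Rbinom (n - 1) m
  - Rbinom n 2 * (Rbinom (n - 2) m - Rbinom_prev (n - 2) m)
  = INR n ^ 2 / 2 * Rbinom (n - 1) m.
Proof.
  intros Hn Hm; destruct n as [|[|k]]; try lia.
  replace (S (S k) - 1)%nat with (S k) by lia; replace (S (S k) - 2)%nat with k by lia.
  pose proof (Rbinom_absorb_sub k m) as H1; pose proof (Rbinom_prev_absorb k m) as H2.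
  rewrite Rbinom_2.
  replace (INR (2 * S (S k) - 2 * m - 1)) with (2 * INR (S (S k)) - 2 * INR m - 1)
    by (rewrite !minus_INR, !mult_INR by lia; simpl; ring).
  rewrite (S_INR (S k)).
  transitivity ((2 * (INR (S k) + 1) - 2 * INR m - 1) / 2 * (INR (S k) + 1) * Rbinom (S k) m
    - (INR (S k) + 1) / 2 * (INR (S k) * Rbinom k m - INR (S k) * Rbinom_prev k m)); [field|].
  rewrite H1, H2; field.
Qed.

Lemma sum_up_pairs_trunc (f : nat -> R) n M :
  (2 * n <= M)%nat -> (forall N, (2 * n <= N)%nat -> f N = 0) ->
  sum_up f M = sum_up (fun m => f (2 * m)%nat + f (2 * m + 1)%nat) n.
Proof. intros HM Hf; rewrite (sum_up_trunc f (2 * n) M Hf HM); apply sum_up_pairs. Qed.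

Lemma main_parts_sum n a b u : (2 <= n)%nat ->
  main_AA n a b u + main_AB n a b u + main_BA n a b u =
  sum_up (fun m => INR n ^ 2 / 2 * Rbinom (n - 1) m * a ^ (2 * n - 2 * m - 2) * b * (u m * u m)) n.
Proof.
  intros Hn; unfold main_AA, main_AB, main_BA.
  rewrite !main_by_antidiag by (intros; apply diag_part_idx).
  fold (coef_AA n a b) (coef_AB n a b) (coef_BA n a b).
  rewrite (sum_up_pairs_trunc _ n (S n + S n)), (sum_up_pairs_trunc _ n (S n + S (n - 2))),
    (sum_up_pairs_trunc _ n (S (n - 2) + S n)), <- !sum_up_add.
  - apply sum_up_ext; intros m Hm.
    rewrite div2_2m, div2_2m1, antidiag_AA_even, antidiag_AA_odd, antidiag_AB_odd, antidiag_BA_odd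
      by lia.
    rewrite <- (main_coef_identity n m) by lia.
    transitivity (u m * u m * (INR (2 * n - 2 * m - 1) / 2 * INR n * Rbinom (n - 1) m
      * a ^ (2 * n - 2 * m - 2) * b
      + (antidiag_sum (S n) (S (n - 2)) (coef_AB n a b) (2 * m)
         + antidiag_sum (S (n - 2)) (S n) (coef_BA n a b) (2 * m)))); [ring|].
    rewrite antidiag_AB_BA_even by lia; ring.
  all: try lia.
  all: intros N HN; (rewrite antidiag_AA_high by lia) || (rewrite antidiag_sum_high by lia); ring.
Qed.

Lemma ell_x_eq x0 t0 beta lam t x : ell_x x0 t0 beta lam t x = 2 * lam * (x - x0).
Proof. unfold ell_x; apply is_derive_unique; unfold ell, psi; auto_derive; auto; ring. Qed.

Lemma ell_xx_eq x0 t0 beta lam t x : ell_xx x0 t0 beta lam t x = 2 * lam.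
Proof.
  unfold ell_xx; simpl; rewrite (Derive_ext _ (fun y => 2 * lam * (y - x0))) by apply ell_x_eq.
  apply is_derive_unique; auto_derive; auto; ring.
Qed.

Lemma Ck2_Derive_n k K f : Ck2 (K + k) f -> Ck2 K (fun t x => Derive_n (fun y => f t y) k x).
Proof.
  revert K f; induction k as [|k IH]; intros K f H; [now rewrite Nat.add_0_r in H|].
  rewrite <- plus_n_Sm in H; apply (IH (S K)) in H; apply H.
Qed.

Lemma smooth2_is_derive_dxn w : smooth2 w ->
  forall k t y, is_derive (fun z => dxn w k t z) y (dxn w (S k) t y).
Proof.
  intros Hw k t y; unfold dxn; simpl.
  destruct (proj1 (proj2 (Ck2_Derive_n k 1 w (Hw _))) t y) as [_ [l Hl]].
  replace (Derive _ y) with l; [exact Hl|symmetry; now apply is_derive_unique].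
Qed.

Lemma is_derive_eq_val (f : R -> R) (x l l' : R) : is_derive f x l -> l = l' -> is_derive f x l'.
Proof. now intros H <-. Qed.

Lemma is_derive_Rmult (f g : R -> R) (x df dg : R) : is_derive f x df -> is_derive g x dg ->
  is_derive (fun y => f y * g y) x (df * g x + f x * dg).
Proof. intros H1 H2; apply (is_derive_mult f g x df dg H1 H2); intros; apply Rmult_comm. Qed.

Lemma gterm_eval_is_derive (A : R -> R) (B : R) (U : nat -> R -> R) x T :
  (forall y, is_derive A y B) -> (forall k y, is_derive (U k) y (U (S k) y)) ->
  is_derive (fun y => gterm_eval T (A y) B (fun k => U k y)) x
    (gterms_eval (gterm_deriv T) (A x) B (fun k => U k x)).
Proof.
  intros HA HU; destruct T as [[[[c p] q] i] j]; simpl.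
  assert (H1 : is_derive (fun y => c * A y ^ p * B ^ q) x (c * (INR p * B * A x ^ pred p) * B ^ q)).
  { eapply is_derive_eq_val; [apply is_derive_Rmult;
      [apply is_derive_scal, is_derive_pow, HA|apply is_derive_const]|].
    unfold zero; simpl; ring. }
  eapply is_derive_eq_val;
    [apply is_derive_Rmult; [apply is_derive_Rmult; [exact H1|apply HU]|apply HU]|].
  destruct p; simpl; ring.
Qed.

Lemma gterms_eval_is_derive (A : R -> R) (B : R) (U : nat -> R -> R) x G :
  (forall y, is_derive A y B) -> (forall k y, is_derive (U k) y (U (S k) y)) ->
  is_derive (fun y => gterms_eval G (A y) B (fun k => U k y)) x
    (gterms_eval (gterms_deriv G) (A x) B (fun k => U k x)).
Proof.
  intros HA HU; induction G as [|T G IH]; [apply (is_derive_const 0 x)|].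
  simpl gterms_deriv; rewrite gterms_eval_app.
  apply (is_derive_plus (fun y => gterm_eval T (A y) B (fun k => U k y))); auto.
  now apply gterm_eval_is_derive.
Qed.

Lemma Gval_eq G x0 t0 beta lam w t y :
  Gval G x0 t0 beta lam w t y =
  gterms_eval G (ell_x x0 t0 beta lam t y) (ell_xx x0 t0 beta lam t y) (fun k => dxn w k t y).
Proof.
  unfold Gval, gterms_eval; induction G as [|[[[[c p] q] i] j] G IH]; [reflexivity|].
  simpl; now rewrite IH.
Qed.

Lemma Derive_Gval G x0 t0 beta lam w t x : smooth2 w ->
  Derive (fun y => Gval G x0 t0 beta lam w t y) x =
  gterms_eval (gterms_deriv G) (ell_x x0 t0 beta lam t x) (ell_xx x0 t0 beta lam t x)
    (fun k => dxn w k t x).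
Proof.
  intros Hw.
  rewrite (Derive_ext _
    (fun y => gterms_eval G (2 * lam * (y - x0)) (2 * lam) (fun k => dxn w k t y)))
    by (intros y; now rewrite Gval_eq, ell_x_eq, ell_xx_eq).
  apply is_derive_unique; rewrite ell_x_eq, ell_xx_eq.
  apply (gterms_eval_is_derive (fun y => 2 * lam * (y - x0)) (2 * lam) (fun k y => dxn w k t y)).
  - intros y; auto_derive; auto; ring.
  - intros k y; now apply smooth2_is_derive_dxn.
Qed.

(** * The remainders R_m *)

Definition Rm_of (rest : list sqterm) (m : nat) : poly2 :=
  map (fun it => let '(c, p, q, _) := it in (c, p, q))
    (filter (fun it => Nat.eqb (sqterm_idx it) m) rest).

Lemma sqterms_eval_split n rest a b u :
  List.Forall (fun it => (sqterm_idx it < n)%nat) rest ->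
  sqterms_eval rest a b u = sum_up (fun m => poly2_eval (Rm_of rest m) a b * (u m * u m)) n.
Proof.
  induction 1 as [|[[[c p] q] m0] L Hit HL IH]; simpl in *.
  - symmetry; apply sum_up_eq0; intros; unfold Rm_of; simpl; ring.
  - rewrite IH, (sum_up_ext (fun m => poly2_eval (Rm_of ((c, p, q, m0) :: L) m) a b * (u m * u m))
      (fun m => (if Nat.eqb m m0 then c * a ^ p * b ^ q * (u m * u m) else 0)
      + poly2_eval (Rm_of L m) a b * (u m * u m))).
    + rewrite sum_up_add, sum_up_delta, (proj2 (Nat.ltb_lt m0 n) Hit).
      unfold sqterm_eval; simpl; ring.
    + intros m _; unfold Rm_of; simpl; rewrite (Nat.eqb_sym m0 m).
      destruct (Nat.eqb_spec m m0); simpl; [subst; ring|ring].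
Qed.

Lemma Rm_of_deg n rest m c p q :
  List.Forall (sqterm_shape (remainder_shape n)) rest -> In (c, p, q) (Rm_of rest m) ->
  (p + q + 3 <= 2 * n - 2 * m)%nat.
Proof.
  intros Hrest Hin; unfold Rm_of in Hin.
  apply in_map_iff in Hin as [[[[c' p'] q'] m'] [E Hin]]; injection E as <- <- <-.
  apply filter_In in Hin as [Hin Hm%Nat.eqb_eq].
  rewrite List.Forall_forall in Hrest; specialize (Hrest _ Hin).
  unfold sqterm_shape, remainder_shape in Hrest; simpl in *; lia.
Qed.

Definition poly2_abs (P : poly2) : R :=
  fold_right (fun mono acc => let '(c, _, _) := mono in Rabs c + acc) 0 P.

Lemma poly2_eval_abs_le (P : poly2) (K : nat) (X Y L : R) :
  (forall c p q, In (c, p, q) P -> (p + q <= K)%nat) -> 1 <= L -> Rabs X <= L -> Rabs Y <= L ->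
  Rabs (poly2_eval P X Y) <= poly2_abs P * L ^ K.
Proof.
  intros HP HL HX HY; induction P as [|[[c p] q] P IH]; simpl; [rewrite Rabs_R0; lra|].
  assert (Hpq : (p + q <= K)%nat) by (apply (HP c); now left).
  eapply Rle_trans; [apply Rabs_triang|]; rewrite Rmult_plus_distr_r.
  apply Rplus_le_compat; [|apply IH; intros; eapply HP; right; eauto].
  rewrite !Rabs_mult, <- !RPow_abs, Rmult_assoc; apply Rmult_le_compat_l; [apply Rabs_pos|].
  eapply Rle_trans; [apply Rmult_le_compat; try apply pow_le; try apply Rabs_pos;
    apply pow_incr; split; [apply Rabs_pos|exact HX|apply Rabs_pos|exact HY]|].
  rewrite <- pow_add; apply Rle_pow; auto.
Qed.

Lemma poly2_abs_ge0 P : 0 <= poly2_abs P.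
Proof. induction P as [|[[c p] q] P IH]; simpl; [lra|pose proof (Rabs_pos c); lra]. Qed.

(* On |x| <= M both ell_x and ell_xx are at most lam * B, whence a monomial of degree d
   is O(lam^d). *)
Lemma poly2_eval_ell_bound (P : poly2) (E : nat) x0 t0 beta M :
  (forall c p q, In (c, p, q) P -> (p + q + 3 <= E)%nat) ->
  exists C, forall lam t x, 1 <= lam -> Rabs x <= M ->
    Rabs (poly2_eval P (ell_x x0 t0 beta lam t x) (ell_xx x0 t0 beta lam t x))
    <= C * powerRZ lam (Z.of_nat E - 3).
Proof.
  intros HP; destruct P as [|mono P0] eqn:EP.
  { exists 0; intros; simpl; rewrite Rabs_R0; lra. }
  rewrite <- EP in HP |- *.
  assert (HE : (3 <= E)%nat).
  { destruct mono as [[c0 p0] q0]; enough (p0 + q0 + 3 <= E)%nat by lia.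
    apply (HP c0); rewrite EP; now left. }
  set (B := 2 * (Rabs M + Rabs x0) + 2).
  exists (poly2_abs P * B ^ (E - 3)); intros lam t x Hl Hx.
  assert (HB : 2 <= B) by (unfold B; pose proof (Rabs_pos M); pose proof (Rabs_pos x0); lra).
  replace (Z.of_nat E - 3)%Z with (Z.of_nat (E - 3)) by lia.
  rewrite <- pow_powerRZ.
  eapply Rle_trans; [apply (poly2_eval_abs_le _ (E - 3) _ _ (lam * B))|].
  - intros c p q Hin; specialize (HP c p q Hin); lia.
  - nra.
  - rewrite ell_x_eq, !Rabs_mult, (Rabs_right 2), (Rabs_right lam) by lra.
    assert (Rabs (x - x0) <= Rabs M + Rabs x0).
    { eapply Rle_trans; [apply Rabs_triang|]; rewrite Rabs_Ropp; pose proof (Rle_abs M); lra. }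
    unfold B; nra.
  - rewrite ell_xx_eq, Rabs_mult, (Rabs_right 2), (Rabs_right lam) by lra.
    unfold B; pose proof (Rabs_pos M); pose proof (Rabs_pos x0); nra.
  - rewrite Rpow_mult_distr; pose proof (poly2_abs_ge0 P).
    pose proof (pow_le B (E - 3)); pose proof (pow_le lam (E - 3)); nra.
Qed.

Lemma I1_I2_eq n x0 t0 beta lam w t x G rest :
  (2 <= n)%nat -> smooth2 w ->
  (forall a b u, I1_poly n a b u * I2_poly n a b u =
     gterms_eval (gterms_deriv G) a b u
     + (main_AA n a b u + main_AB n a b u + main_BA n a b u) + sqterms_eval rest a b u) ->
  List.Forall (sqterm_shape (remainder_shape n)) rest ->
  I1 n x0 t0 beta lam w t x * I2 n x0 t0 beta lam w t x =
  Derive (fun y => Gval G x0 t0 beta lam w t y) x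
  + sum_up (fun m =>
      (INR n ^ 2 / 2 * Rbinom (n - 1) m
         * ell_x x0 t0 beta lam t x ^ (2 * n - 2 * m - 2) * ell_xx x0 t0 beta lam t x
       + poly2_eval (Rm_of rest m) (ell_x x0 t0 beta lam t x) (ell_xx x0 t0 beta lam t x))
      * dxn w m t x ^ 2) n.
Proof.
  intros Hn Hw Hdec Hrest.
  change (I1 n x0 t0 beta lam w t x * I2 n x0 t0 beta lam w t x) with
    (I1_poly n (ell_x x0 t0 beta lam t x) (ell_xx x0 t0 beta lam t x) (fun k => dxn w k t x) *
     I2_poly n (ell_x x0 t0 beta lam t x) (ell_xx x0 t0 beta lam t x) (fun k => dxn w k t x)).
  assert (Hidx : List.Forall (fun it => (sqterm_idx it < n)%nat) rest).
  { eapply List.Forall_impl; [|exact Hrest]; unfold sqterm_shape, remainder_shape; intros; lia. }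
  rewrite Hdec, main_parts_sum, Derive_Gval, (sqterms_eval_split n) by auto.
  rewrite Rplus_assoc, <- sum_up_add; f_equal; apply sum_up_ext; intros; ring.
Qed.

Theorem proposition3p1 (n : nat) (Hn : (2 <= n)%nat) :
  exists (G : list Gterm) (Rm : nat -> poly2),
    (forall (x0 t0 beta lam : R) (w : R -> R -> R),
        0 < beta -> 1 <= lam -> smooth2 w ->
        forall t x : R,
          I1 n x0 t0 beta lam w t x * I2 n x0 t0 beta lam w t x =
          Derive (fun y => Gval G x0 t0 beta lam w t y) x
          + sum_up (fun m =>
              ((INR n) ^ 2 / 2 * Rbinom (n - 1) m
                 * ell_x x0 t0 beta lam t x ^ (2 * n - 2 * m - 2)
                 * ell_xx x0 t0 beta lam t x
               + poly2_eval (Rm m) (ell_x x0 t0 beta lam t x)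
                                   (ell_xx x0 t0 beta lam t x))
              * (dxn w m t x) ^ 2) n) /\
    (forall (m : nat), (m < n)%nat ->
       forall (x0 t0 beta : R), 0 < beta ->
       forall M : R, exists C : R,
         forall (lam t x : R), 1 <= lam -> Rabs t <= M -> Rabs x <= M ->
           Rabs (poly2_eval (Rm m) (ell_x x0 t0 beta lam t x)
                                   (ell_xx x0 t0 beta lam t x))
           <= C * powerRZ lam (Z.of_nat (2 * n - 2 * m) - 3)).
Proof.
  destruct (I1_I2_poly_reduces n) as (G & rest & Hdec & Hrest).
  exists G, (Rm_of rest); split.
  - intros x0 t0 beta lam w _ _ Hw t x; now apply I1_I2_eq.
  - intros m _ x0 t0 beta _ M.
    destruct (poly2_eval_ell_bound (Rm_of rest m) (2 * n - 2 * m) x0 t0 beta M) as [C HC].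
    { intros c p q; now apply Rm_of_deg. }
    exists C; intros lam t x Hl _ Hx; now apply HC.
Qed.
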